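(* Let $G=(V,E)$ be a graph on $n$ vertices with adjacency matrix $A_G$, let $\{e_v : v\in V\}$ be the standard basis of $\mathbb{C}^n$, and let $\{P_v\}_{v\in V}$ be a $d/r$-representation of $G$. Let $\Gamma$ be a random unitary matrix sampled from the Haar measure on $\mathrm{U}(d)$ and define $$Q = \sum_{v \in V} e_v e_v^* \otimes \Gamma^* P_v \Gamma \in \mathbb{C}^{n\times n}\otimes \mathbb{C}^{d\times d}.$$ Then $Q$ is a stochastic block decomposition of size $d/r$, and $Q(A_G\otimes I_d)Q = O$ (for every value of $\Gamma$).
   Context: A $d/r$-representation of $G$ is a family of rank-$r$ orthogonal projectors $P_v \in \mathbb{C}^{d\times d}$, $v \in V$, with $P_vP_w = O$ for every edge $vw$. $\mathrm{U}(d)$ is the group of $d\times d$ complex unitary matrices and the Haar measure is its unique left- and right-invariant probability measure. A stochastic block decomposition of size $\alpha$ is a random variable $Q$ defined on a probability space taking values in the set of orthogonal projection matrices in $\mathbb{C}^{N\times N}$ (for some $N$) such that the entrywise expectation satisfies $\mathbb{E}[Q] = \alpha^{-1} I$. *)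

From HB Require Import structures.
From mathcomp Require Import all_boot all_order all_algebra.
From mathcomp Require Import complex mxtens.
From mathcomp Require Import all_classical all_reals all_analysis.

Set Implicit Arguments.
Unset Strict Implicit.
Unset Printing Implicit Defensive.

Import Order.TTheory GRing.Theory Num.Theory.
Local Open Scope ring_scope.
Local Open Scope classical_set_scope.

Definition mxstar (R : rcfType) (m n : nat) (A : 'M[R[i]]_(m, n)) : 'M[R[i]]_(n, m) :=
  map_mx (@conjc R) A^T.

Definition unitary_mx (R : rcfType) (d : nat) (U : 'M[R[i]]_d) : Prop :=
  mxstar U *m U = 1%:M /\ U *m mxstar U = 1%:M.

Definition orth_proj (R : rcfType) (N : nat) (P : 'M[R[i]]_N) : Prop :=
  P *m P = P /\ mxstar P = P.

Definition dr_representation (R : rcfType) (n d r : nat) (adj : rel 'I_n)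
    (P : 'I_n -> 'M[R[i]]_d) : Prop :=
  (forall v, orth_proj (P v) /\ \rank (P v) = r) /\
  (forall v w, adj v w -> P v *m P w = 0).

Definition adjacency_mx (R : rcfType) (n : nat) (adj : rel 'I_n) : 'M[R[i]]_n :=
  \matrix_(v, w) (adj v w)%:R.

(* Carrier alias for C^{d x d}, made pointed (by 0) for the generated sigma-algebra. *)
Definition cmxT (R : realType) (d : nat) := 'M[R[i]]_d.
HB.instance Definition _ (R : realType) (d : nat) := Choice.on (cmxT R d).
HB.instance Definition _ (R : realType) (d : nat) :=
  isPointed.Build (cmxT R d) (0 : 'M[R[i]]_d).

(* Borel sigma-algebra on C^{d x d} = R^{2 d^2}: generated by the preimages of
   Borel sets of R under the real and imaginary parts of the entries. *)
Definition cmx_gen (R : realType) (d : nat) : set (set (cmxT R d)) :=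
  [set A | exists (k l : 'I_d) (B : set R), measurable B /\
     (A = (fun M : cmxT R d => complex.Re (M k l)) @^-1` B \/
      A = (fun M : cmxT R d => complex.Im (M k l)) @^-1` B)].

Notation cmx R d := (g_sigma_algebraType (@cmx_gen R d)).

(* mu is (the) Haar measure on U(d), viewed as a (probability) set function on
   C^{d x d}: total mass one, concentrated on U(d), and invariant under left and
   right multiplication by unitaries. *)
Definition is_haar (R : realType) (d : nat) (mu : set (cmx R d) -> \bar R) : Prop :=
  mu setT = 1%E /\
  (exists S : set (cmx R d), measurable S /\ S `<=` [set U | unitary_mx U] /\ mu S = 1%E) /\
  (forall U : 'M[R[i]]_d, unitary_mx U -> forall A : set (cmx R d), measurable A ->
     mu ((fun M : cmx R d => (U *m M : cmx R d)) @^-1` A) = mu A /\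
     mu ((fun M : cmx R d => (M *m U : cmx R d)) @^-1` A) = mu A).

Definition mx_integrable (R : realType) (dO : measure_display) (O : measurableType dO)
    (P : probability O R) (N : nat) (X : O -> 'M[R[i]]_N) : Prop :=
  forall k l : 'I_N,
    P.-integrable setT (fun w => (complex.Re (X w k l))%:E) /\
    P.-integrable setT (fun w => (complex.Im (X w k l))%:E).

Definition mx_expect (R : realType) (dO : measure_display) (O : measurableType dO)
    (P : probability O R) (N : nat) (X : O -> 'M[R[i]]_N) : 'M[R[i]]_N :=
  \matrix_(k, l) Complex (Rintegral P setT (fun w => complex.Re (X w k l)))
                         (Rintegral P setT (fun w => complex.Im (X w k l))).

Definition stochastic_block_decomposition (R : realType) (dO : measure_display)
    (O : measurableType dO) (P : probability O R) (N : nat)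
    (Q : O -> 'M[R[i]]_N) (alpha : R) : Prop :=
  (forall w, orth_proj (Q w)) /\ mx_integrable P Q /\
  mx_expect P Q = (Complex (alpha^-1) 0)%:M.

Definition Qmx (R : rcfType) (n d : nat) (P : 'I_n -> 'M[R[i]]_d) (G : 'M[R[i]]_d)
    : 'M[R[i]]_(n * d) :=
  \sum_(v < n) (delta_mx v v *t (mxstar G *m P v *m G)).

(* Every block Gamma^* P_v Gamma of Q is an orthogonal projector, so the block
   diagonal matrix Q is one too, and the (v, w) block of Q (A_G (x) I) Q is
   A_vw Gamma^* P_v P_w Gamma, which vanishes because P_v P_w = 0 on edges.
   Right invariance of the Haar measure gives E[Gamma^* P Gamma] =
   U^* E[Gamma^* P Gamma] U for every unitary U: conjugating by a sign flip
   kills the off-diagonal entries and conjugating by a transposition equalises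
   the diagonal ones, so E[Gamma^* P Gamma] is scalar with trace tr P = rank P,
   i.e. equal to (r/d) I, and E[Q] = (r/d) I follows blockwise.  All the random
   matrices involved are orthogonal projectors, whose entries are bounded by 1,
   which is what makes them integrable. *)

From HB Require Import structures.
From mathcomp Require Import all_boot all_order all_algebra perm.
From mathcomp Require Import complex mxtens lra.
From mathcomp Require Import all_classical all_reals all_analysis measurable_realfun.

Set Implicit Arguments.
Unset Strict Implicit.
Unset Printing Implicit Defensive.

Import Order.TTheory GRing.Theory Num.Theory.
Local Open Scope ring_scope.
Local Open Scope classical_set_scope.

Section ComplexParts.
Variable R : rcfType.
Implicit Types a b : R[i].

Lemma complex_ReM a b :
  complex.Re (a * b) = complex.Re a * complex.Re b - complex.Im a * complex.Im b.
Proof. by case: a; case: b. Qed.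

Lemma complex_ImM a b :
  complex.Im (a * b) = complex.Re a * complex.Im b + complex.Im a * complex.Re b.
Proof. by case: a => ? ?; case: b => ? ? /=; rewrite addrC. Qed.

Lemma complex_ReJ a : complex.Re a^*%C = complex.Re a.
Proof. by case: a. Qed.

Lemma complex_ImJ a : complex.Im a^*%C = - complex.Im a.
Proof. by case: a. Qed.

End ComplexParts.

Lemma mxtrace_idempotent (F : fieldType) n (P : 'M[F]_n) :
  P *m P = P -> \tr P = (\rank P)%:R.
Proof.
move=> PP; have [X XC] := row_fullP (col_base_full P).
have [Y BY] := row_freeP (row_base_free P).
move: (col_base P) (row_base P) (mulmx_base P) XC BY => C B eP XC BY.
have BC : B *m C = 1%:M.
  have : X *m (C *m B *m (C *m B)) *m Y = X *m (C *m B) *m Y by rewrite eP PP.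
  by rewrite !mulmxA XC !mul1mx -!mulmxA BY !mulmx1 => ->.
by rewrite -{1}eP mxtrace_mulC BC mxtrace1.
Qed.

Section Adjoint.
Variable R : rcfType.

Lemma mxstarM m n p (A : 'M[R[i]]_(m, n)) (B : 'M[R[i]]_(n, p)) :
  mxstar (A *m B) = mxstar B *m mxstar A.
Proof. by rewrite /mxstar trmx_mul map_mxM. Qed.

Lemma mxstarK m n (A : 'M[R[i]]_(m, n)) : mxstar (mxstar A) = A.
Proof. by apply/matrixP => i j; rewrite !mxE conjcK. Qed.

Lemma mxstar_sum m n I (r : seq I) (F : I -> 'M[R[i]]_(m, n)) :
  mxstar (\sum_(i <- r) F i) = \sum_(i <- r) mxstar (F i).
Proof.
apply/matrixP => i j; rewrite !mxE summxE rmorph_sum summxE.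
by apply: eq_bigr => k _; rewrite !mxE.
Qed.

Lemma mxstar_tens m n p q (A : 'M[R[i]]_(m, n)) (B : 'M[R[i]]_(p, q)) :
  mxstar (A *t B) = mxstar A *t mxstar B.
Proof. by rewrite /mxstar trmx_tens map_mxT. Qed.

Lemma mxstar_delta m n (i : 'I_m) (j : 'I_n) :
  mxstar (delta_mx i j : 'M[R[i]]_(m, n)) = delta_mx j i.
Proof. by apply/matrixP => a b; rewrite !mxE conjc_nat andbC. Qed.

Lemma unitary_mulmx d (U V : 'M[R[i]]_d) :
  unitary_mx U -> unitary_mx V -> unitary_mx (U *m V).
Proof.
move=> [UU UU'] [VV VV']; rewrite /unitary_mx mxstarM; split.
  by rewrite mulmxA -(mulmxA _ _ U) UU mulmx1 VV.
by rewrite mulmxA -(mulmxA _ V) VV' mulmx1 UU'.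
Qed.

Lemma mulmx_conj_unitary d (U A B : 'M[R[i]]_d) : unitary_mx U ->
  (mxstar U *m A *m U) *m (mxstar U *m B *m U) = mxstar U *m (A *m B) *m U.
Proof. by case=> _ UU'; rewrite !mulmxA -(mulmxA _ U) UU' mulmx1. Qed.

Lemma orth_proj_conj_unitary d (U P : 'M[R[i]]_d) :
  unitary_mx U -> orth_proj P -> orth_proj (mxstar U *m P *m U).
Proof.
move=> uU [PP sP]; split; first by rewrite mulmx_conj_unitary // PP.
by rewrite !mxstarM mxstarK sP mulmxA.
Qed.

Lemma orth_proj_entry_bound N (P : 'M[R[i]]_N) k l : orth_proj P ->
  `|complex.Re (P k l)| <= 1 /\ `|complex.Im (P k l)| <= 1.
Proof.
case=> PP sP.
pose t j := complex.Re (P j l) ^+ 2 + complex.Im (P j l) ^+ 2.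
have Pll : complex.Re (P l l) = \sum_j t j.
  rewrite -{1}PP -{1}sP mxE raddf_sum; apply: eq_bigr => j _.
  by rewrite !mxE /= complex_ReM complex_ReJ complex_ImJ mulNr opprK.
have t_le j : t j <= complex.Re (P l l).
  by rewrite Pll (bigD1 j) //= lerDl sumr_ge0 // => ? _; rewrite addr_ge0 ?sqr_ge0.
have := t_le k; have := t_le l; rewrite /t !ler_norml => tl tk.
have Pll_le1 : complex.Re (P l l) <= 1 by nra.
split; apply/andP; split; nra.
Qed.

End Adjoint.

Lemma mul_delta_mx_mx_delta (R : pzRingType) m n p q (i : 'I_m) (j : 'I_n)
    (k : 'I_p) (l : 'I_q) (A : 'M[R]_(n, p)) :
  delta_mx i j *m A *m delta_mx k l = A j k *: delta_mx i l.
Proof.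
apply/matrixP => a b; rewrite mxE (bigD1 k) //= big1 => [|c /negbTE ck]; last first.
  by rewrite [delta_mx k l c b]mxE ck mulr0.
rewrite addr0 [delta_mx k l k b]mxE eqxx mxE (bigD1 j) //= big1 => [|e /negbTE ej].
  by rewrite addr0 !mxE eqxx andbT; case: (a == i); case: (b == l);
    rewrite /= ?(mul1r, mulr1, mul0r, mulr0).
by rewrite mxE ej andbF mul0r.
Qed.

Section UnitaryMatrices.
Context {R : rcfType} {n : nat}.

Definition sign_mx (k : 'I_n) : 'M[R[i]]_n := diag_mx (\row_j (-1) ^+ (j == k)).

Lemma mxstar_sign_mx k : mxstar (sign_mx k) = sign_mx k.
Proof.
rewrite /mxstar tr_diag_mx map_diag_mx; congr diag_mx.
by apply/rowP => j; rewrite !mxE rmorph_sign.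
Qed.

Lemma unitary_sign_mx k : unitary_mx (sign_mx k).
Proof.
have SS : sign_mx k *m sign_mx k = 1%:M.
  apply/matrixP => a b; rewrite mul_diag_mx !mxE.
  by case: (a == b); case: (a == k); rewrite ?mulrNN ?mulr1 ?mulr0.
by rewrite /unitary_mx mxstar_sign_mx SS.
Qed.

Lemma sign_mx_conj_offdiag (X : 'M[R[i]]_n) i j : i != j ->
  (mxstar (sign_mx i) *m X *m sign_mx i) i j = - X i j.
Proof.
move=> ij; rewrite mxstar_sign_mx mul_mx_diag mul_diag_mx !mxE eqxx.
by rewrite eq_sym (negbTE ij) mulr1 mulN1r.
Qed.

Lemma mxstar_tperm_mx (i j : 'I_n) : mxstar (tperm_mx i j : 'M[R[i]]_n) = tperm_mx i j.
Proof. by rewrite /mxstar tr_tperm_mx map_tperm_mx. Qed.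

Lemma unitary_tperm_mx (i j : 'I_n) : unitary_mx (tperm_mx i j : 'M[R[i]]_n).
Proof. by rewrite /unitary_mx mxstar_tperm_mx -perm_mxM tperm2 perm_mx1. Qed.

Lemma tperm_mx_conj_diag (X : 'M[R[i]]_n) i j :
  (mxstar (tperm_mx i j) *m X *m tperm_mx i j) i i = X j j.
Proof. by rewrite mxstar_tperm_mx -xcolE -xrowE !mxE tpermL. Qed.

End UnitaryMatrices.

Section BlockDiagonal.
Context {R : rcfType} {n d : nat}.
Implicit Type X : 'I_n -> 'M[R[i]]_d.

Definition blockdiag_mx X : 'M[R[i]]_(n * d) := \sum_v delta_mx v v *t X v.

Lemma blockdiag_mxE X i j k l :
  blockdiag_mx X (mxtens_index (i, k)) (mxtens_index (j, l)) = (i == j)%:R * X i k l.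
Proof.
rewrite summxE (bigD1 i) //= big1 => [|v /negbTE vi]; last first.
  by rewrite tensmxE mxE eq_sym vi mul0r.
by rewrite addr0 tensmxE mxE eqxx eq_sym.
Qed.

Lemma orth_proj_blockdiag_mx X :
  (forall v, orth_proj (X v)) -> orth_proj (blockdiag_mx X).
Proof.
move=> projX; split; last first.
  rewrite mxstar_sum; apply: eq_bigr => v _.
  by rewrite mxstar_tens mxstar_delta (projX v).2.
rewrite mulmx_suml; apply: eq_bigr => v _; rewrite mulmx_sumr (bigD1 v) //= big1.
  by rewrite addr0 tensmx_mul mul_delta_mx (projX v).1.
by move=> w /negbTE wv; rewrite tensmx_mul mul_delta_mx_cond eq_sym wv tens0mx.
Qed.

Lemma blockdiag_mx_adjacency_mx (adj : rel 'I_n) X :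
  (forall v w, adj v w -> X v *m X w = 0) ->
  blockdiag_mx X *m (@adjacency_mx R n adj *t 1%:M) *m blockdiag_mx X = 0.
Proof.
move=> Xadj; rewrite mulmx_suml mulmx_suml; apply: big1 => v _.
rewrite mulmx_sumr; apply: big1 => w _.
rewrite !tensmx_mul mulmx1 mul_delta_mx_mx_delta mxE.
by case: (boolP (adj v w)) => [/Xadj ->|_]; rewrite ?tensmx0 ?scale0r ?tens0mx.
Qed.

End BlockDiagonal.

Lemma scalar_mx_mxtrace (F : numFieldType) d (M : 'M[F]_d) :
  (forall i j, i != j -> M i j = 0) -> (forall i j, M i i = M j j) ->
  M = (\tr M / d%:R)%:M.
Proof.
case: d M => [|d] M offdiag diag; first by apply/matrixP => -[].
have Mscalar : M = (M 0 0)%:M.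
  apply/matrixP => i j; rewrite mxE; have [<-|ij] := eqVneq i j.
    by rewrite (diag i 0).
  by rewrite offdiag.
have trM : \tr M = M 0 0 *+ d.+1.
  rewrite /mxtrace (eq_bigr (fun=> M 0 0)) => [|i _]; last exact: diag.
  by rewrite sumr_const card_ord.
by rewrite trM -(mulr_natr (M 0 0)) mulfK ?pnatr_eq0.
Qed.

Section MeasurableComplexFunctions.
Context {d : measure_display} {T : measurableType d} {R : realType}.

Definition measurable_cfun (f : T -> R[i]) :=
  measurable_fun setT (fun x => complex.Re (f x)) /\
  measurable_fun setT (fun x => complex.Im (f x)).

Definition measurable_mxfun {m n} (X : T -> 'M[R[i]]_(m, n)) :=
  forall i j, measurable_cfun (fun x => X x i j).

Lemma measurable_cfun_cst c : measurable_cfun (fun=> c).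
Proof. by split; exact: measurable_cst. Qed.

Lemma measurable_cfunD f g : measurable_cfun f -> measurable_cfun g ->
  measurable_cfun (fun x => f x + g x).
Proof.
by move=> [mf1 mf2] [mg1 mg2]; split; under eq_fun do rewrite raddfD;
  exact: measurable_funD.
Qed.

Lemma measurable_cfunM f g : measurable_cfun f -> measurable_cfun g ->
  measurable_cfun (fun x => f x * g x).
Proof.
move=> [mf1 mf2] [mg1 mg2]; split.
- under eq_fun do rewrite complex_ReM.
  by apply: measurable_funB; exact: measurable_funM.
- under eq_fun do rewrite complex_ImM.
  by apply: measurable_funD; exact: measurable_funM.
Qed.

Lemma measurable_cfunJ f : measurable_cfun f -> measurable_cfun (fun x => (f x)^*%C).
Proof.
move=> [mf1 mf2]; split; first by under eq_fun do rewrite complex_ReJ.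
by under eq_fun do rewrite complex_ImJ; exact: measurable_funN.
Qed.

Lemma measurable_cfun_sum I (r : seq I) (F : I -> T -> R[i]) :
  (forall i, measurable_cfun (F i)) -> measurable_cfun (fun x => \sum_(i <- r) F i x).
Proof.
move=> mF; elim: r => [|i r IHr].
  by under eq_fun do rewrite big_nil; exact: measurable_cfun_cst.
by under eq_fun do rewrite big_cons; exact: measurable_cfunD.
Qed.

Lemma measurable_mxfun_cst m n (A : 'M[R[i]]_(m, n)) : measurable_mxfun (fun=> A).
Proof. by move=> i j; exact: measurable_cfun_cst. Qed.

Lemma measurable_mxfun_mul m n p (X : T -> 'M[R[i]]_(m, n)) (Y : T -> 'M[R[i]]_(n, p)) :
  measurable_mxfun X -> measurable_mxfun Y -> measurable_mxfun (fun x => X x *m Y x).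
Proof.
move=> mX mY i j; under eq_fun do rewrite mxE.
by apply: measurable_cfun_sum => k; exact: measurable_cfunM.
Qed.

Lemma measurable_mxfun_star m n (X : T -> 'M[R[i]]_(m, n)) :
  measurable_mxfun X -> measurable_mxfun (fun x => mxstar (X x)).
Proof. by move=> mX i j; under eq_fun do rewrite !mxE; exact: measurable_cfunJ. Qed.

Lemma measurable_mxfun_blockdiag n m (X : T -> 'I_n -> 'M[R[i]]_m) :
  (forall v, measurable_mxfun (X^~ v)) -> measurable_mxfun (fun x => blockdiag_mx (X x)).
Proof.
move=> mX a b; case/(@mxtens_indexP n m): a => i k; case/(@mxtens_indexP n m): b => j l.
under eq_fun do rewrite blockdiag_mxE.
by apply: measurable_cfunM; [exact: measurable_cfun_cst | exact: mX].
Qed.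

End MeasurableComplexFunctions.

Lemma measurable_mxfun_comp d d' (T : measurableType d) (T' : measurableType d')
    (R : realType) m n (phi : T' -> T) (X : T -> 'M[R[i]]_(m, n)) :
  measurable_fun setT phi -> measurable_mxfun X -> measurable_mxfun (X \o phi).
Proof.
move=> mphi mX i j; have [mRe mIm] := mX i j.
by split; [exact: measurableT_comp mRe mphi | exact: measurableT_comp mIm mphi].
Qed.

Section ComplexMatrixSigmaAlgebra.
Variables (R : realType) (d : nat).

Lemma measurable_cmx_entry : measurable_mxfun (fun M : cmx R d => M : 'M[R[i]]_d).
Proof.
move=> k l; split=> _ B mB; rewrite setTI; apply: sub_sigma_algebra.
  by exists k, l, B; split => //; left.
by exists k, l, B; split => //; right.
Qed.

Lemma measurable_fun_cmx d' (T : measurableType d') (phi : T -> cmx R d) :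
  measurable_mxfun (phi : T -> 'M[R[i]]_d) -> measurable_fun setT phi.
Proof.
move=> mphi; apply: (@measurability _ _ _ (cmx R d) _ _ (@cmx_gen R d)) => //.
move=> _ [A [k [l [B [mB [->|->]]]]] <-].
  exact: (mphi k l).1.
exact: (mphi k l).2.
Qed.

Lemma measurable_mulmxr (U : 'M[R[i]]_d) :
  measurable_fun setT (fun M : cmx R d => (M *m U : cmx R d)).
Proof.
apply: measurable_fun_cmx; apply: measurable_mxfun_mul measurable_cmx_entry _.
exact: measurable_mxfun_cst.
Qed.

Lemma measurable_mxfun_conj (A : 'M[R[i]]_d) :
  measurable_mxfun (fun M : cmx R d => mxstar (M : 'M[R[i]]_d) *m A *m M).
Proof.
apply: measurable_mxfun_mul; last exact: measurable_cmx_entry.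
apply: measurable_mxfun_mul; last exact: measurable_mxfun_cst.
by apply: measurable_mxfun_star; exact: measurable_cmx_entry.
Qed.

End ComplexMatrixSigmaAlgebra.

Lemma Rintegral_sum d (T : measurableType d) (R : realType)
    (mu : {measure set T -> \bar R}) (D : set T) I (r : seq I) (f : I -> T -> R) :
  measurable D -> (forall i, mu.-integrable D (EFin \o f i)) ->
  \int[mu]_(x in D) (\sum_(i <- r) f i x) = \sum_(i <- r) \int[mu]_(x in D) f i x.
Proof.
move=> mD intf; elim: r => [|i r IHr].
  by under eq_fun do rewrite big_nil; rewrite Rintegral_cst // mul0r big_nil.
under eq_fun do rewrite big_cons; rewrite RintegralD // ?IHr ?big_cons //.
have -> : EFin \o (fun x => \sum_(j <- r) f j x) = fun x => \sum_(j <- r) (EFin \o f j) x.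
  by apply/funext => x; rewrite /= sumEFin.
exact: integrable_sum.
Qed.

Section MatrixExpectation.
Context {dO : measure_display} {O : measurableType dO} {R : realType}.
Variable Pr : probability O R.

Lemma mx_integrable_orth_proj N (X : O -> 'M[R[i]]_N) :
  measurable_mxfun X -> (forall w, orth_proj (X w)) -> mx_integrable Pr X.
Proof.
move=> mX projX k l; have [mRe mIm] := mX k l.
have finPr : (Pr setT < +oo)%E by rewrite probability_setT ltry.
split; apply: measurable_bounded_integrable => //; exists 1; split => // y y1 w _ /=.
  exact: le_trans (orth_proj_entry_bound k l (projX w)).1 (ltW y1).
exact: le_trans (orth_proj_entry_bound k l (projX w)).2 (ltW y1).
Qed.

Lemma Rintegral_probability_cst (c : R) : \int[Pr]_(x in setT) c = c.
Proof.
by rewrite Rintegral_cst // (_ : _ setT = 1%E) ?mulr1 //; exact: probability_setT.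
Qed.

Lemma mx_expect_entry_eq m n (X : O -> 'M[R[i]]_m) (Y : O -> 'M[R[i]]_n) i j k l :
  (forall w, X w i j = Y w k l) -> mx_expect Pr X i j = mx_expect Pr Y k l.
Proof.
by move=> XY; rewrite !mxE; congr Complex; apply: eq_Rintegral => w _; rewrite XY.
Qed.

Lemma mx_expect_entry_cst n (X : O -> 'M[R[i]]_n) i j c :
  (forall w, X w i j = c) -> mx_expect Pr X i j = c.
Proof.
move=> Xc; transitivity (Complex (complex.Re c) (complex.Im c)); last by case: c {Xc}.
by rewrite mxE; congr Complex; rewrite -[RHS]Rintegral_probability_cst;
  apply: eq_Rintegral => w _; rewrite Xc.
Qed.

Lemma mx_expect_entryN m n (X : O -> 'M[R[i]]_m) (Y : O -> 'M[R[i]]_n) i j k l :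
  mx_integrable Pr Y -> (forall w, X w i j = - Y w k l) ->
  mx_expect Pr X i j = - mx_expect Pr Y k l.
Proof.
move=> intY XY; have [intRe intIm] := intY k l; rewrite !mxE /=.
by congr Complex; rewrite -mulN1r -RintegralZl //;
  apply: eq_Rintegral => w _; rewrite XY raddfN mulN1r.
Qed.

Lemma mxtrace_expect_cst n (X : O -> 'M[R[i]]_n) c :
  mx_integrable Pr X -> (forall w, \tr (X w) = c) -> \tr (mx_expect Pr X) = c.
Proof.
move=> intX trX.
have ReE : complex.Re (\tr (mx_expect Pr X)) = complex.Re c.
  rewrite raddf_sum; under eq_bigr do rewrite mxE /=.
  rewrite -Rintegral_sum // => [|k]; last exact: (intX k k).1.
  rewrite -[RHS]Rintegral_probability_cst; apply: eq_Rintegral => w _.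
  by rewrite -(trX w) raddf_sum.
have ImE : complex.Im (\tr (mx_expect Pr X)) = complex.Im c.
  rewrite raddf_sum; under eq_bigr do rewrite mxE /=.
  rewrite -Rintegral_sum // => [|k]; last exact: (intX k k).2.
  rewrite -[RHS]Rintegral_probability_cst; apply: eq_Rintegral => w _.
  by rewrite -(trX w) raddf_sum.
by move: ReE ImE; case: (\tr _) => a b; case: c {trX} => a' b' /= -> ->.
Qed.

Lemma mx_expect_blockdiag n m (X : O -> 'I_n -> 'M[R[i]]_m) c :
  (forall v, mx_expect Pr (X^~ v) = c%:M) ->
  mx_expect Pr (fun w => blockdiag_mx (X w)) = c%:M.
Proof.
move=> EX; apply/matrixP => a b.
case/(@mxtens_indexP n m): a => i k; case/(@mxtens_indexP n m): b => j l.
rewrite [RHS]mxE (can_eq (@mxtens_indexK _ _)) xpair_eqE.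
have [<-|ij] := eqVneq i j; last first.
  by apply: mx_expect_entry_cst => w; rewrite blockdiag_mxE (negbTE ij) mul0r.
rewrite (mx_expect_entry_eq (Y := X^~ i) (k := k) (l := l)) ?EX ?mxE // => w.
by rewrite blockdiag_mxE eqxx mul1r.
Qed.

End MatrixExpectation.

Section HaarInvariance.
Variables (R : realType) (d : nat).
Context {dO : measure_display} {O : measurableType dO}.
Variables (Pr : probability O R) (Gamma : O -> cmx R d).
Hypothesis mGamma : measurable_fun setT Gamma.
Hypothesis Gamma_haar : is_haar (fun A : set (cmx R d) => Pr (Gamma @^-1` A)).

Lemma Rintegral_haar_mulmxr (U : 'M[R[i]]_d) (h : cmx R d -> R) :
  unitary_mx U -> measurable_fun setT h ->
  Pr.-integrable setT (EFin \o (h \o Gamma)) ->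
  Pr.-integrable setT (EFin \o (fun w => h (Gamma w *m U : cmx R d))) ->
  \int[Pr]_w h (Gamma w *m U : cmx R d) = \int[Pr]_w h (Gamma w).
Proof.
move=> uU mh inth inthU.
have mEh : measurable_fun setT (EFin \o h) by exact/measurable_EFinP.
have mGammaU := measurableT_comp (measurable_mulmxr U) mGamma.
rewrite /Rintegral; congr fine.
have := integral_pushforward (mu := Pr) (D := setT) mGammaU mEh.
have := integral_pushforward (mu := Pr) (D := setT) mGamma mEh.
rewrite !preimage_setT => <- // <- //.
apply: eq_measure_integral => A mA _; have [_ [_ haar_inv]] := Gamma_haar.
exact: (haar_inv U uU A mA).2.
Qed.

Lemma mx_expect_haar_mulmxr (U : 'M[R[i]]_d) N (F : cmx R d -> 'M[R[i]]_N) :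
  unitary_mx U -> measurable_mxfun F -> mx_integrable Pr (F \o Gamma) ->
  mx_integrable Pr (fun w => F (Gamma w *m U : cmx R d)) ->
  mx_expect Pr (fun w => F (Gamma w *m U : cmx R d)) = mx_expect Pr (F \o Gamma).
Proof.
move=> uU mF intF intFU; apply/matrixP => k l; rewrite !mxE.
have [mRe mIm] := mF k l; have [intRe intIm] := intF k l.
have [intReU intImU] := intFU k l.
congr Complex.
  exact: (@Rintegral_haar_mulmxr U (fun M => complex.Re (F M k l))).
exact: (@Rintegral_haar_mulmxr U (fun M => complex.Im (F M k l))).
Qed.

End HaarInvariance.

Section HaarConjugatedProjector.
Variables (R : realType) (d : nat).
Context {dO : measure_display} {O : measurableType dO}.
Variables (Pr : probability O R) (Gamma : O -> cmx R d).
Hypothesis mGamma : measurable_fun setT Gamma.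
Hypothesis Gamma_unitary : forall w, unitary_mx (Gamma w).
Hypothesis Gamma_haar : is_haar (fun A : set (cmx R d) => Pr (Gamma @^-1` A)).
Variable P : 'M[R[i]]_d.
Hypothesis projP : orth_proj P.

Let conjP (M : 'M[R[i]]_d) := mxstar M *m P *m M.

Let mx_integrable_conjP (phi : O -> cmx R d) :
  measurable_fun setT phi -> (forall w, unitary_mx (phi w)) ->
  mx_integrable Pr (conjP \o phi).
Proof.
move=> mphi uphi; apply: mx_integrable_orth_proj.
  exact: measurable_mxfun_comp mphi (measurable_mxfun_conj P).
by move=> w; exact: orth_proj_conj_unitary.
Qed.

Lemma mx_expect_conj_unitary U : unitary_mx U ->
  mx_expect Pr (fun w => mxstar U *m conjP (Gamma w) *m U) =
  mx_expect Pr (conjP \o Gamma).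
Proof.
move=> uU; have mGammaU := measurableT_comp (measurable_mulmxr U) mGamma.
rewrite -(mx_expect_haar_mulmxr mGamma Gamma_haar uU (measurable_mxfun_conj P)).
- by congr mx_expect; apply/funext => w; rewrite /conjP mxstarM !mulmxA.
- exact: mx_integrable_conjP.
- by apply: (mx_integrable_conjP mGammaU) => w; exact: unitary_mulmx.
Qed.

Lemma mx_expect_conj_offdiag i j : i != j -> mx_expect Pr (conjP \o Gamma) i j = 0.
Proof.
move=> ij; have := mx_expect_conj_unitary (unitary_sign_mx i).
move/(congr1 (fun M : 'M[R[i]]_d => M i j)).
rewrite /= (mx_expect_entryN (Y := conjP \o Gamma) (k := i) (l := j)).
- by move/eqP; rewrite eqNr => /eqP.
- exact: mx_integrable_conjP.
- by move=> w; exact: sign_mx_conj_offdiag.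
Qed.

Lemma mx_expect_conj_diag i j :
  mx_expect Pr (conjP \o Gamma) i i = mx_expect Pr (conjP \o Gamma) j j.
Proof.
have := mx_expect_conj_unitary (unitary_tperm_mx i j).
move/(congr1 (fun M : 'M[R[i]]_d => M i i)).
by move=> /= <-; apply: mx_expect_entry_eq => w; exact: tperm_mx_conj_diag.
Qed.

Lemma mxtrace_expect_conj : \tr (mx_expect Pr (conjP \o Gamma)) = (\rank P)%:R.
Proof.
apply: mxtrace_expect_cst; first exact: mx_integrable_conjP.
move=> w; rewrite /= /conjP mxtrace_mulC mulmxA (Gamma_unitary w).2 mul1mx.
exact: mxtrace_idempotent projP.1.
Qed.

Lemma mx_expect_conj_haar :
  mx_expect Pr (fun w => mxstar (Gamma w) *m P *m Gamma w) = ((\rank P)%:R / d%:R)%:M.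
Proof.
rewrite -mxtrace_expect_conj.
exact: scalar_mx_mxtrace mx_expect_conj_offdiag mx_expect_conj_diag.
Qed.

End HaarConjugatedProjector.

Theorem lemma2p4 (R : realType) (n d r : nat) (adj : rel 'I_n)
    (adj_sym : symmetric adj) (adj_irr : irreflexive adj)
    (P : 'I_n -> 'M[R[i]]_d) (hr : (0 < r)%N)
    (hP : @dr_representation R n d r adj P)
    (dO : measure_display) (O : measurableType dO) (Pr : probability O R)
    (Gamma : O -> cmx R d) (mGamma : measurable_fun setT Gamma)
    (Gamma_unitary : forall w, unitary_mx (Gamma w))
    (Gamma_haar : is_haar (fun A : set (cmx R d) => Pr (Gamma @^-1` A))) :
  stochastic_block_decomposition Pr (fun w => Qmx P (Gamma w)) (d%:R / r%:R) /\
  (forall G : 'M[R[i]]_d, unitary_mx G ->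
     Qmx P G *m (@adjacency_mx R n adj *t (1%:M : 'M[R[i]]_d)) *m Qmx P G = 0).
Proof.
have [projP Padj] := hP.
have QE G : Qmx P G = blockdiag_mx (fun v => mxstar G *m P v *m G) by [].
have projQ w : orth_proj (Qmx P (Gamma w)).
  by apply: orth_proj_blockdiag_mx => v; exact: orth_proj_conj_unitary (projP v).1.
split; last first.
  move=> G uG; rewrite QE; apply: blockdiag_mx_adjacency_mx => v w /Padj PvPw.
  by rewrite mulmx_conj_unitary // PvPw mulmx0 mul0mx.
have mQ : measurable_mxfun (fun w => Qmx P (Gamma w)).
  apply: measurable_mxfun_blockdiag => v.
  exact: measurable_mxfun_comp mGamma (measurable_mxfun_conj _).
split; first exact: projQ.
split; first exact: mx_integrable_orth_proj mQ projQ.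
rewrite (mx_expect_blockdiag (c := r%:R / d%:R)) => [|v]; last first.
  rewrite -(projP v).2.
  exact: (mx_expect_conj_haar mGamma Gamma_unitary Gamma_haar (projP v).1).
by rewrite invf_div complexr0 fmorph_div !rmorph_nat.
Qed.
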